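(* Let $\alpha$ be a unit speed Frenet curve in $\mathbb{E}^3$ and $\beta$ an osculating mate of $\alpha$ with binormal $\bar B$. The following are equivalent: (i) the binormal indicatrix $\bar B$ of $\beta$ is a general helix; (ii) $\beta$ is a slant helix; (iii) $\alpha$ is a general helix.
   Context: $\alpha:I\to\mathbb{E}^3$ is parametrized by arclength $s$, with Frenet frame $\{T,N,B\}$, curvature $\kappa>0$, torsion $\tau$. An osculating mate of $\alpha$ is a curve $\beta(s)=\int(x_1T+x_2N)ds$ with smooth $x_1,x_2$, $x_1^2+x_2^2=1$ and $\beta''\perp\mathrm{span}\{T,N\}$; $\beta$ is assumed to be a Frenet curve, unit speed in $s$, with Frenet frame $\{\bar T,\bar N,\bar B\}$. The binormal indicatrix of $\beta$ is the spherical curve $s\mapsto\bar B(s)$. A general helix is a curve whose tangent makes a constant angle with a fixed direction (equivalently torsion/curvature is constant). A slant helix is a curve whose principal normal makes a constant angle with a fixed direction (equivalently $\frac{k^2}{(k^2+t^2)^{3/2}}(t/k)'$ is constant, $k,t$ its curvature and torsion). *)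

From Stdlib Require Import Reals.
From Coquelicot Require Import Coquelicot.
Open Scope R_scope.

Record vec3 := V3 { vx : R; vy : R; vz : R }.

Definition vadd (u v : vec3) : vec3 := V3 (vx u + vx v) (vy u + vy v) (vz u + vz v).
Definition vscale (c : R) (u : vec3) : vec3 := V3 (c * vx u) (c * vy u) (c * vz u).
Definition vzero : vec3 := V3 0 0 0.
Definition dot (u v : vec3) : R := vx u * vx v + vy u * vy v + vz u * vz v.
Definition cross (u v : vec3) : vec3 :=
  V3 (vy u * vz v - vz u * vy v) (vz u * vx v - vx u * vz v) (vx u * vy v - vy u * vx v).
Definition vnorm (u : vec3) : R := sqrt (dot u u).

Definition has_vderiv (f : R -> vec3) (s : R) (v : vec3) : Prop :=
  is_derive (fun r => vx (f r)) s (vx v) /\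
  is_derive (fun r => vy (f r)) s (vy v) /\
  is_derive (fun r => vz (f r)) s (vz v).

Definition in_I (a b : Rbar) (s : R) : Prop := Rbar_lt a s /\ Rbar_lt s b.

Definition frenet_curve (a b : Rbar) (c : R -> vec3) (T N B : R -> vec3) (k t : R -> R) : Prop :=
  forall s, in_I a b s ->
    has_vderiv c s (T s) /\ vnorm (T s) = 1 /\
    0 < k s /\ has_vderiv T s (vscale (k s) (N s)) /\
    vnorm (N s) = 1 /\ dot (T s) (N s) = 0 /\
    B s = cross (T s) (N s) /\
    has_vderiv N s (vadd (vscale (- k s) (T s)) (vscale (t s) (B s))) /\
    has_vderiv B s (vscale (- t s) (N s)) /\
    continuous k s /\ continuous t s.

Definition osculating_mate (a b : Rbar) (T N : R -> vec3) (x1 x2 : R -> R)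
    (beta : R -> vec3) : Prop :=
  forall s, in_I a b s ->
    ex_derive x1 s /\ ex_derive x2 s /\
    x1 s ^ 2 + x2 s ^ 2 = 1 /\
    has_vderiv beta s (vadd (vscale (x1 s) (T s)) (vscale (x2 s) (N s))) /\
    exists w, has_vderiv (fun r => vadd (vscale (x1 r) (T r)) (vscale (x2 r) (N r))) s w /\
              dot w (T s) = 0 /\ dot w (N s) = 0.

(** General helix: a regular curve whose tangent direction makes a constant
    angle with a fixed direction (unit vector u). *)
Definition general_helix (a b : Rbar) (g : R -> vec3) : Prop :=
  exists (u : vec3) (c : R), vnorm u = 1 /\
    forall s, in_I a b s ->
      exists v, has_vderiv g s v /\ v <> vzero /\ dot v u = c * vnorm v.

Definition slant_helix (a b : Rbar) (g : R -> vec3) : Prop :=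
  exists (T N B : R -> vec3) (k t : R -> R),
    frenet_curve a b g T N B k t /\
    exists (u : vec3) (c : R), vnorm u = 1 /\
      forall s, in_I a b s -> dot (N s) u = c.

(* Write beta' = x1 T + x2 N.  Differentiating once more and using that beta'' is
   orthogonal to T and N leaves kb Nb = x2 tau B, so the principal normal of beta is
   e B with a constant sign e = +-1, and tau never vanishes.  Each of the three
   conditions then says that B makes a constant angle with a fixed unit vector u:
   for the slant helix directly; for the binormal indicatrix because its tangent is
   -tb Nb = -e tb B with tb of constant sign; and for alpha because
   <T,u>' = kappa <N,u> and <B,u>' = -tau <N,u> vanish together. *)

From Stdlib Require Import Reals Lra Psatz Classical.
From Coquelicot Require Import Coquelicot.
Open Scope R_scope.

Set Implicit Arguments.

Definition constant_on (a b : Rbar) (f : R -> R) : Prop :=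
  exists c, forall s, in_I a b s -> f s = c.

Definition constant_angle (a b : Rbar) (V : R -> vec3) : Prop :=
  exists u, vnorm u = 1 /\ constant_on a b (fun s => dot (V s) u).

Ltac vec_ring := intros; repeat match goal with v : vec3 |- _ => destruct v end;
  unfold dot, cross, vadd, vscale, vzero; simpl;
  lazymatch goal with |- @eq vec3 _ _ => f_equal; ring | _ => ring end.

Lemma dot_scale_l c v u : dot (vscale c v) u = c * dot v u.
Proof. vec_ring. Qed.

Lemma dot_self_unit u : vnorm u = 1 -> dot u u = 1.
Proof.
  unfold vnorm; intro Hu.
  assert (0 <= dot u u) by (destruct u; unfold dot; simpl; nra).
  rewrite <- (sqrt_sqrt (dot u u)), Hu by assumption; ring.
Qed.

Lemma dot_scale_self c v : dot (vscale c v) (vscale c v) = c ^ 2 * dot v v.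
Proof. vec_ring. Qed.

Lemma vnorm_scale c v : dot v v = 1 -> vnorm (vscale c v) = Rabs c.
Proof.
  intro Hv; unfold vnorm.
  rewrite dot_scale_self, Hv, Rmult_1_r, <- Rsqr_pow2; apply sqrt_Rsqr_abs.
Qed.

Lemma dot_self_neq0 v : dot v v <> 0 -> v <> vzero.
Proof. intros Hv ->; apply Hv; vec_ring. Qed.

Lemma dot_cross_self t n :
  dot (cross t n) (cross t n) = dot t t * dot n n - dot t n ^ 2.
Proof. vec_ring. Qed.

Lemma orthonormal_cross_component (t n w : vec3) A C D :
  dot t t = 1 -> dot n n = 1 -> dot t n = 0 ->
  w = vadd (vadd (vscale A t) (vscale C n)) (vscale D (cross t n)) ->
  dot w t = 0 -> dot w n = 0 -> w = vscale D (cross t n).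
Proof.
  intros Htt Hnn Htn Hw Hwt Hwn.
  assert (EA : dot w t = A * dot t t + C * dot t n) by (subst w; vec_ring).
  assert (EC : dot w n = A * dot t n + C * dot n n) by (subst w; vec_ring).
  rewrite Htt, Htn in EA; rewrite Htn, Hnn in EC.
  replace A with 0 in Hw by lra; replace C with 0 in Hw by lra.
  subst w; vec_ring.
Qed.

Lemma unit_parallel_unit (n m : vec3) c d :
  dot n n = 1 -> dot m m = 1 -> c <> 0 -> vscale c n = vscale d m ->
  n = vscale (dot n m) m /\ dot n m ^ 2 = 1.
Proof.
  intros Hn Hm Hc Hcd.
  assert (En : n = vscale (d / c) m).
  { replace n with (vscale (/ c) (vscale c n))
      by (destruct n; unfold vscale; simpl; f_equal; field; exact Hc).
    rewrite Hcd; destruct m; unfold vscale; simpl; f_equal; field; exact Hc. }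
  assert (Edot : dot n m = d / c) by (rewrite En, dot_scale_l, Hm; ring).
  rewrite Edot; split; [exact En|].
  rewrite <- Hn, En, dot_scale_self, Hm; ring.
Qed.

Lemma has_vderiv_unique f s v w : has_vderiv f s v -> has_vderiv f s w -> v = w.
Proof.
  intros [H1 [H2 H3]] [G1 [G2 G3]].
  apply is_derive_unique in H1, H2, H3, G1, G2, G3.
  destruct v, w; simpl in *; f_equal; congruence.
Qed.

Lemma is_derive_Rplus (f g : R -> R) s df dg :
  is_derive f s df -> is_derive g s dg -> is_derive (fun r => f r + g r) s (df + dg).
Proof. exact (is_derive_plus f g s df dg). Qed.

Lemma has_vderiv_add (U V : R -> vec3) s dU dV :
  has_vderiv U s dU -> has_vderiv V s dV ->
  has_vderiv (fun r => vadd (U r) (V r)) s (vadd dU dV).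
Proof.
  intros [H1 [H2 H3]] [G1 [G2 G3]].
  split; [|split]; apply is_derive_Rplus; assumption.
Qed.

Lemma has_vderiv_scale (x : R -> R) (V : R -> vec3) s dx dV :
  is_derive x s dx -> has_vderiv V s dV ->
  has_vderiv (fun r => vscale (x r) (V r)) s (vadd (vscale dx (V s)) (vscale (x s) dV)).
Proof.
  intros Hx [H1 [H2 H3]].
  split; [|split]; apply Derive.is_derive_mult; assumption.
Qed.

Lemma is_derive_dot f g s v w :
  has_vderiv f s v -> has_vderiv g s w ->
  is_derive (fun r => dot (f r) (g r)) s (dot v (g s) + dot (f s) w).
Proof.
  intros [H1 [H2 H3]] [G1 [G2 G3]].
  replace (dot v (g s) + dot (f s) w) with
    ((vx v * vx (g s) + vx (f s) * vx w) + (vy v * vy (g s) + vy (f s) * vy w)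
     + (vz v * vz (g s) + vz (f s) * vz w)) by (unfold dot; ring).
  apply is_derive_Rplus; [apply is_derive_Rplus|]; apply Derive.is_derive_mult; assumption.
Qed.

Lemma has_vderiv_const (u : vec3) s : has_vderiv (fun _ => u) s vzero.
Proof. split; [|split]; apply (is_derive_const (K := R_AbsRing) (V := R_NormedModule)). Qed.

Lemma is_derive_dot_r f s v u :
  has_vderiv f s v -> is_derive (fun r => dot (f r) u) s (dot v u).
Proof.
  intro Hf.
  replace (dot v u) with (dot v u + dot (f s) vzero) by vec_ring.
  exact (is_derive_dot Hf (has_vderiv_const u s)).
Qed.

Section Interval.

Variables a b : Rbar.

Lemma in_I_locally s : in_I a b s -> locally s (in_I a b).
Proof. intro Hs; exact (open_and _ _ (open_Rbar_gt a) (open_Rbar_lt b) s Hs). Qed.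

Lemma in_I_between x y z : in_I a b x -> in_I a b y -> x <= z <= y -> in_I a b z.
Proof.
  intros [Hx _] [_ Hy] [Hxz Hzy]; split.
  - apply Rbar_lt_le_trans with x; [assumption | simpl; lra].
  - apply Rbar_le_lt_trans with y; [simpl; lra | assumption].
Qed.

Lemma has_vderiv_ext_in_I (f g : R -> vec3) s v :
  (forall r, in_I a b r -> f r = g r) -> in_I a b s -> has_vderiv f s v -> has_vderiv g s v.
Proof.
  intros Hfg Hs [H1 [H2 H3]].
  assert (Hloc : forall h : vec3 -> R, locally s (fun r => h (f r) = h (g r))).
  { intro h; apply (filter_imp (in_I a b)); [intros r Hr; rewrite Hfg by exact Hr; reflexivity|].
    exact (in_I_locally Hs). }
  split; [|split]; eapply is_derive_ext_loc; eauto; apply Hloc.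
Qed.

Lemma constant_on_intro (f : R -> R) :
  (forall x y, in_I a b x -> in_I a b y -> f x = f y) -> constant_on a b f.
Proof.
  intro Hf.
  destruct (classic (exists s0, in_I a b s0)) as [[s0 Hs0] | Hempty].
  - exists (f s0); intros s Hs; exact (Hf s s0 Hs Hs0).
  - exists 0; intros s Hs; exfalso; exact (Hempty (ex_intro _ s Hs)).
Qed.

Lemma is_derive_0_constant_on (f : R -> R) :
  (forall s, in_I a b s -> is_derive f s 0) -> constant_on a b f.
Proof.
  intro Hf; apply constant_on_intro; intros x y Hx Hy.
  assert (Hxy : forall z, Rmin x y <= z <= Rmax x y -> in_I a b z).
  { intros z Hz; unfold Rmin, Rmax in Hz; destruct (Rle_dec x y).
    - exact (in_I_between Hx Hy Hz).
    - exact (in_I_between Hy Hx Hz). }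
  destruct (MVT_gen f x y (fun _ => 0)) as [c [_ Hc]].
  - intros z Hz; apply Hf, Hxy; lra.
  - intros z Hz; apply continuity_pt_filterlim.
    apply (ex_derive_continuous (K := R_AbsRing) (V := R_NormedModule)).
    exists 0; apply Hf, Hxy, Hz.
  - lra.
Qed.

Lemma constant_on_is_derive_0 (f : R -> R) s l :
  constant_on a b f -> in_I a b s -> is_derive f s l -> l = 0.
Proof.
  intros [c Hc] Hs Hl.
  assert (H0 : is_derive f s 0).
  { apply (is_derive_ext_loc (fun _ => c)).
    - apply (filter_imp (in_I a b)); [intros r Hr; symmetry; exact (Hc r Hr)|].
      exact (in_I_locally Hs).
    - apply (is_derive_const (K := R_AbsRing) (V := R_NormedModule)). }
  apply is_derive_unique in Hl, H0; congruence.
Qed.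

Lemma constant_on_iff_is_derive (f h g : R -> R) :
  (forall s, in_I a b s -> is_derive f s (h s * g s)) ->
  (forall s, in_I a b s -> h s <> 0) ->
  constant_on a b f <-> (forall s, in_I a b s -> g s = 0).
Proof.
  intros Hf Hh; split.
  - intros Hc s Hs.
    destruct (Rmult_integral _ _ (constant_on_is_derive_0 Hc Hs (Hf s Hs))) as [H|H];
      [exfalso; exact (Hh s Hs H) | exact H].
  - intro Hg; apply is_derive_0_constant_on; intros s Hs.
    specialize (Hf s Hs); rewrite Hg, Rmult_0_r in Hf by exact Hs; exact Hf.
Qed.

Section Continuous_nonvanishing.

Variable f : R -> R.
Hypothesis f_cont : forall s, in_I a b s -> continuous f s.
Hypothesis f_neq0 : forall s, in_I a b s -> f s <> 0.

Lemma continuous_nonvanishing_same_sign_lt x y :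
  in_I a b x -> in_I a b y -> x < y -> 0 < f x * f y.
Proof.
  intros Hx Hy Hxy.
  assert (Hcont : forall g : R -> R, (forall z, continuous f z -> continuous g z) ->
            forall z, x <= z <= y -> continuity_pt g z).
  { intros g Hg z Hz; apply continuity_pt_filterlim, Hg, f_cont, (in_I_between Hx Hy Hz). }
  assert (Hfx := f_neq0 Hx); assert (Hfy := f_neq0 Hy).
  destruct (Rlt_or_le 0 (f x * f y)) as [Hpos | Hneg]; [exact Hpos | exfalso].
  destruct (Rlt_or_le (f x) 0) as [Hfx_neg | Hfx_pos].
  - destruct (Ranalysis5.IVT_interv f x y (Hcont f (fun z H => H)) Hxy Hfx_neg)
      as [z [Hz Hfz]]; [nra|].
    exact (f_neq0 (in_I_between Hx Hy Hz) Hfz).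
  - destruct (Ranalysis5.IVT_interv (fun r => - f r) x y (Hcont _ (continuous_opp f)) Hxy)
      as [z [Hz Hfz]]; [nra | nra |].
    apply (f_neq0 (in_I_between Hx Hy Hz)); lra.
Qed.

Lemma continuous_nonvanishing_same_sign x y :
  in_I a b x -> in_I a b y -> 0 < f x * f y.
Proof.
  intros Hx Hy; destruct (Rtotal_order x y) as [Hxy | [<- | Hyx]].
  - exact (continuous_nonvanishing_same_sign_lt Hx Hy Hxy).
  - assert (Hfx := f_neq0 Hx); nra.
  - rewrite Rmult_comm; exact (continuous_nonvanishing_same_sign_lt Hy Hx Hyx).
Qed.

Lemma continuous_nonvanishing_sign :
  exists sg, (sg = 1 \/ sg = -1) /\ forall s, in_I a b s -> Rabs (f s) = sg * f s.
Proof.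
  destruct (classic (exists s0, in_I a b s0)) as [[s0 Hs0] | Hempty].
  - destruct (Rlt_or_le 0 (f s0)) as [Hpos | Hneg]; [exists 1 | exists (-1)];
      split; auto; intros s Hs; assert (Hprod := continuous_nonvanishing_same_sign Hs0 Hs).
    + rewrite Rabs_pos_eq; nra.
    + rewrite Rabs_left; nra.
  - exists 1; split; [left; reflexivity|]; intros s Hs; exfalso; exact (Hempty (ex_intro _ s Hs)).
Qed.

End Continuous_nonvanishing.

Lemma continuous_sqr_1_constant_on (f : R -> R) :
  (forall s, in_I a b s -> continuous f s) -> (forall s, in_I a b s -> f s ^ 2 = 1) ->
  constant_on a b f.
Proof.
  intros Hcont Hsq; apply constant_on_intro; intros x y Hx Hy.
  assert (Hneq0 : forall s, in_I a b s -> f s <> 0).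
  { intros s Hs Hz; specialize (Hsq s Hs); rewrite Hz in Hsq; lra. }
  assert (Hprod := continuous_nonvanishing_same_sign Hcont Hneq0 Hx Hy).
  assert (Hsqx := Hsq x Hx); assert (Hsqy := Hsq y Hy).
  assert (Hprod1 : f x * f y = 1).
  { assert ((f x * f y - 1) * (f x * f y + 1) = 0) as Hfac by nra.
    destruct (Rmult_integral _ _ Hfac); lra. }
  nra.
Qed.

End Interval.

Lemma general_helix_iff_deriv a b (g d : R -> vec3) :
  (forall s, in_I a b s -> has_vderiv g s (d s)) -> (forall s, in_I a b s -> d s <> vzero) ->
  general_helix a b g <->
  exists u c, vnorm u = 1 /\ forall s, in_I a b s -> dot (d s) u = c * vnorm (d s).
Proof.
  intros Hg Hd; split.
  - intros [u [c [Hu Hc]]]; exists u, c; split; [exact Hu|]; intros s Hs.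
    destruct (Hc s Hs) as [v [Hv [_ Hvu]]].
    rewrite (has_vderiv_unique (Hg s Hs) Hv); exact Hvu.
  - intros [u [c [Hu Hc]]]; exists u, c; split; [exact Hu|]; intros s Hs.
    exists (d s); auto.
Qed.

Section Frenet.

Variables (a b : Rbar) (c T N B : R -> vec3) (k t : R -> R).
Hypothesis Hc : frenet_curve a b c T N B k t.

Lemma frenet_orthonormal s : in_I a b s ->
  dot (T s) (T s) = 1 /\ dot (N s) (N s) = 1 /\ dot (T s) (N s) = 0 /\ dot (B s) (B s) = 1.
Proof.
  intro Hs; destruct (Hc Hs) as (_ & HT & _ & _ & HN & HTN & HB & _).
  apply dot_self_unit in HT, HN.
  rewrite HB, dot_cross_self, HT, HN, HTN; repeat split; auto; ring.
Qed.

Lemma frenet_general_helix_iff : general_helix a b c <-> constant_angle a b T.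
Proof.
  assert (HT : forall s, in_I a b s -> vnorm (T s) = 1) by (intros s Hs; apply (Hc Hs)).
  rewrite (general_helix_iff_deriv T).
  - split.
    + intros [u [c0 [Hu Hc0]]]; exists u; split; [exact Hu|]; exists c0; intros s Hs.
      rewrite Hc0, HT by exact Hs; ring.
    + intros [u [Hu [c0 Hc0]]]; exists u, c0; split; [exact Hu|]; intros s Hs.
      rewrite Hc0, HT by exact Hs; ring.
  - intros s Hs; apply (Hc Hs).
  - intros s Hs; apply dot_self_neq0; rewrite dot_self_unit by exact (HT s Hs); lra.
Qed.

Lemma frenet_constant_angle_tangent_binormal :
  (forall s, in_I a b s -> t s <> 0) -> constant_angle a b T <-> constant_angle a b B.
Proof.
  intro Ht.
  assert (Hiff : forall u, constant_on a b (fun s => dot (T s) u) <->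
                           constant_on a b (fun s => dot (B s) u)).
  { intro u.
    rewrite (constant_on_iff_is_derive k (fun s => dot (N s) u)),
            (constant_on_iff_is_derive (fun s => - t s) (fun s => dot (N s) u));
      [reflexivity | ..]; intros s Hs;
      destruct (Hc Hs) as (_ & _ & Hk & HTd & _ & _ & _ & _ & HBd & _).
    - rewrite <- dot_scale_l; exact (is_derive_dot_r u HBd).
    - apply Ropp_neq_0_compat, Ht, Hs.
    - rewrite <- dot_scale_l; exact (is_derive_dot_r u HTd).
    - lra. }
  split; intros [u [Hu Hconst]]; exists u; split; try apply Hiff; assumption.
Qed.

End Frenet.

Section Osculating_mate.

Variables (a b : Rbar) (alpha beta T N B : R -> vec3) (kappa tau x1 x2 : R -> R).
Hypothesis HA : frenet_curve a b alpha T N B kappa tau.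
Hypothesis HO : osculating_mate a b T N x1 x2 beta.

Section Mate_frame.

Variables (Tb Nb Bb : R -> vec3) (kb tb : R -> R).
Hypothesis HB : frenet_curve a b beta Tb Nb Bb kb tb.

Lemma mate_tangent s : in_I a b s ->
  Tb s = vadd (vscale (x1 s) (T s)) (vscale (x2 s) (N s)).
Proof.
  intro Hs; destruct (HO Hs) as (_ & _ & _ & Hbeta & _).
  exact (has_vderiv_unique (proj1 (HB Hs)) Hbeta).
Qed.

Lemma mate_curvature_normal s : in_I a b s ->
  vscale (kb s) (Nb s) = vscale (x2 s * tau s) (B s).
Proof.
  intro Hs.
  destruct (HA Hs) as (_ & _ & _ & HTd & _ & _ & HBdef & HNd & _).
  destruct (HO Hs) as ([d1 Hd1] & [d2 Hd2] & _ & _ & w & Hw & HwT & HwN).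
  destruct (HB Hs) as (_ & _ & _ & HTbd & _).
  assert (Ew : w = vscale (kb s) (Nb s)).
  { exact (has_vderiv_unique Hw (has_vderiv_ext_in_I _ mate_tangent Hs HTbd)). }
  assert (Ew' := has_vderiv_unique Hw
                   (has_vderiv_add (has_vderiv_scale Hd1 HTd) (has_vderiv_scale Hd2 HNd))).
  destruct (frenet_orthonormal HA Hs) as (HTT & HNN & HTN & _).
  rewrite <- Ew, HBdef.
  (* w = (x1' - x2 kappa) T + (x1 kappa + x2') N + x2 tau B *)
  apply (orthonormal_cross_component (A := d1 - x2 s * kappa s) (C := x1 s * kappa s + d2)); auto.
  rewrite Ew', HBdef; unfold vadd, vscale, cross; simpl; f_equal; ring.
Qed.

Lemma mate_torsion_neq0 s : in_I a b s -> tau s <> 0.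
Proof.
  intros Hs Htau.
  assert (Hk := mate_curvature_normal Hs); rewrite Htau, Rmult_0_r in Hk.
  destruct (HB Hs) as (_ & _ & Hkb & _ & HNb & _).
  apply dot_self_unit in HNb.
  assert (Hdot : dot (vscale (kb s) (Nb s)) (vscale (kb s) (Nb s)) = 0)
    by (rewrite Hk; vec_ring).
  rewrite dot_scale_self, HNb in Hdot; nra.
Qed.

Lemma mate_normal_binormal s : in_I a b s ->
  Nb s = vscale (dot (Nb s) (B s)) (B s) /\ dot (Nb s) (B s) ^ 2 = 1.
Proof.
  intro Hs.
  destruct (HB Hs) as (_ & _ & Hkb & _ & HNb & _).
  apply (unit_parallel_unit (c := kb s) (d := x2 s * tau s)).
  - apply dot_self_unit, HNb.
  - apply (frenet_orthonormal HA Hs).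
  - lra.
  - exact (mate_curvature_normal Hs).
Qed.

Lemma mate_normal_eq : exists e, forall s, in_I a b s -> Nb s = vscale e (B s) /\ e ^ 2 = 1.
Proof.
  assert (Hconst : constant_on a b (fun s => dot (Nb s) (B s))).
  { apply continuous_sqr_1_constant_on; intros s Hs; [| apply (mate_normal_binormal Hs)].
    destruct (HA Hs) as (_ & _ & _ & _ & _ & _ & _ & _ & HBd & _).
    destruct (HB Hs) as (_ & _ & _ & _ & _ & _ & _ & HNbd & _).
    apply (ex_derive_continuous (K := R_AbsRing) (V := R_NormedModule)).
    eexists; exact (is_derive_dot HNbd HBd). }
  destruct Hconst as [e He]; exists e; intros s Hs.
  rewrite <- (He s Hs); exact (mate_normal_binormal Hs).
Qed.

End Mate_frame.

Lemma mate_slant_helix_iff Tb Nb Bb kb tb :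
  frenet_curve a b beta Tb Nb Bb kb tb -> slant_helix a b beta <-> constant_angle a b B.
Proof.
  intro HB; split.
  - intros (T' & N' & B' & k' & t' & HB' & u & c & Hu & Hc).
    destruct (mate_normal_eq HB') as [e He].
    exists u; split; [exact Hu|]; exists (e * c); intros s Hs.
    destruct (He s Hs) as [HN' He2].
    rewrite <- (Hc s Hs), HN', dot_scale_l.
    transitivity (e ^ 2 * dot (B s) u); [rewrite He2 | ]; ring.
  - intros [u [Hu [c Hc]]].
    destruct (mate_normal_eq HB) as [e He].
    exists Tb, Nb, Bb, kb, tb; split; [exact HB|].
    exists u, (e * c); split; [exact Hu|]; intros s Hs.
    rewrite (proj1 (He s Hs)), dot_scale_l, (Hc s Hs); reflexivity.
Qed.

Lemma mate_binormal_indicatrix_general_helix_iff Tb Nb Bb kb tb :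
  frenet_curve a b beta Tb Nb Bb kb tb -> (forall s, in_I a b s -> tb s <> 0) ->
  general_helix a b Bb <-> constant_angle a b B.
Proof.
  intros HB Htb.
  destruct (mate_normal_eq HB) as [e He].
  assert (Htb_cont : forall s, in_I a b s -> continuous tb s) by (intros s Hs; apply (HB s Hs)).
  destruct (continuous_nonvanishing_sign Htb_cont Htb) as [sg [Hsg Habs]].
  assert (Hangle : forall u c s, in_I a b s ->
      dot (vscale (- tb s) (Nb s)) u = c * vnorm (vscale (- tb s) (Nb s)) <->
      dot (B s) u = - (e * sg * c)).
  { intros u c s Hs.
    destruct (He s Hs) as [HNb He2].
    assert (HNN : dot (Nb s) (Nb s) = 1) by (apply dot_self_unit, (HB s Hs)).
    rewrite vnorm_scale, Rabs_Ropp, Habs, dot_scale_l, HNb, dot_scale_l by assumption.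
    specialize (Htb s Hs); split; intro H.
    - apply (Rmult_eq_reg_l (tb s)); [|exact Htb].
      transitivity (- e * (- tb s * (e * dot (B s) u))).
      + transitivity (e ^ 2 * (tb s * dot (B s) u)); [rewrite He2|]; ring.
      + rewrite H; ring.
    - rewrite H; transitivity (e ^ 2 * (sg * tb s * c)); [|rewrite He2]; ring. }
  rewrite (general_helix_iff_deriv (fun s => vscale (- tb s) (Nb s))).
  - split.
    + intros [u [c [Hu Hc]]]; exists u; split; [exact Hu|].
      exists (- (e * sg * c)); intros s Hs; apply Hangle, Hc; exact Hs.
    + intros [u [Hu [c Hc]]]; exists u, (- (e * sg * c)); split; [exact Hu|].
      intros s Hs; apply Hangle; [exact Hs|].
      rewrite (Hc s Hs); destruct (He s Hs) as [_ He2].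
      replace (- (e * sg * - (e * sg * c))) with (e ^ 2 * sg ^ 2 * c) by ring.
      rewrite He2; destruct Hsg as [-> | ->]; ring.
  - intros s Hs; apply (HB s Hs).
  - intros s Hs; apply dot_self_neq0.
    assert (HNN : dot (Nb s) (Nb s) = 1) by (apply dot_self_unit, (HB s Hs)).
    rewrite dot_scale_self, HNN, Rmult_1_r; apply pow_nonzero, Ropp_neq_0_compat, Htb, Hs.
Qed.

End Osculating_mate.

Unset Implicit Arguments.

Theorem theorem16 (a b : Rbar) (alpha beta : R -> vec3)
    (T N B Tb Nb Bb : R -> vec3) (kappa tau kb tb x1 x2 : R -> R) :
  Rbar_lt a b ->
  frenet_curve a b alpha T N B kappa tau ->
  osculating_mate a b T N x1 x2 beta ->
  frenet_curve a b beta Tb Nb Bb kb tb ->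
  (* the binormal indicatrix of beta is a regular curve: Bb' = - tb Nb <> 0 *)
  (forall s, in_I a b s -> tb s <> 0) ->
  (general_helix a b Bb <-> slant_helix a b beta) /\
  (slant_helix a b beta <-> general_helix a b alpha).
Proof.
  intros _ HA HO HB Htb.
  assert (Htau : forall s, in_I a b s -> tau s <> 0)
    by (intros s Hs; exact (mate_torsion_neq0 HA HO HB Hs)).
  rewrite (mate_binormal_indicatrix_general_helix_iff HA HO HB Htb),
          (mate_slant_helix_iff HA HO HB),
          (frenet_general_helix_iff HA),
          (frenet_constant_angle_tangent_binormal HA Htau).
  tauto.
Qed.
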